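(* Let $G$ be a random $q\times q$ symmetric matrix which is almost surely positive definite, let $F(v)=\mathbb{E}\big[\sqrt{v^{\top}Gv}\big]$, and assume the relevant expectations are finite and differentiation in $v$ commutes with expectation. Then for every $v\in\mathbb{R}^q\setminus\{0\}$ the matrix $\tfrac12\mathrm{Hess}(F^2)(v)$ is positive definite, i.e. $w^{\top}\,\tfrac12\mathrm{Hess}(F^2)(v)\,w>0$ for all $w\in\mathbb{R}^q\setminus\{0\}$.
   Context: In the paper $G=J_f^{\top}J_f$ with $J_f$ the almost surely full rank $D\times q$ Jacobian of a stochastic immersion $f:\mathbb{R}^q\to\mathbb{R}^D$ at a fixed point. $\mathrm{Hess}$ is the Hessian with respect to $v$. *)

From HB Require Import structures.
From mathcomp Require Import all_boot all_order all_algebra.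
From mathcomp Require Import all_classical all_reals all_analysis.
Set Implicit Arguments. Unset Strict Implicit. Unset Printing Implicit Defensive.
Import Order.TTheory GRing.Theory Num.Theory.
Import numFieldNormedType.Exports.
Local Open Scope classical_set_scope.
Local Open Scope ring_scope.

Definition qform (R : realType) (q : nat) (A : 'M[R]_q) (v : 'rV[R]_q) : R :=
  (v *m A *m v^T) 0 0.

Definition symmx (R : realType) (q : nat) (A : 'M[R]_q) : Prop := A^T = A.

Definition posdefmx_q (R : realType) (q : nat) (A : 'M[R]_q) : Prop :=
  forall x : 'rV[R]_q, x != 0 -> 0 < qform A x.

Definition ebasis (R : realType) (q : nat) (i : 'I_q) : 'rV[R]_q := delta_mx 0 i.

Definition hessian (R : realType) (q : nat) (f : 'rV[R]_q -> R) (v : 'rV[R]_q)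
  : 'M[R]_q :=
  \matrix_(i, j) ('D_(ebasis R i) ('D_(ebasis R j) f)) v.

Definition sqrtqf (R : realType) (q : nat) (A : 'M[R]_q) (v : 'rV[R]_q) : R :=
  Num.sqrt (qform A v).

Definition expF (d : measure_display) (T : measurableType d) (R : realType)
  (P : probability T R) (q : nat) (G : T -> 'M[R]_q) (v : 'rV[R]_q) : R :=
  Rintegral P setT (fun om => sqrtqf (G om) v).

(* Write N_G(v) = sqrt (v^T G v), so that F = E[N_G].  The quadratic form of
   (1/2) Hess(F^2)(v) at w equals F(v) E[w^T Hess N_G(v) w] + E[grad N_G(v) . w]^2.
   Pointwise, w^T Hess N_G(v) w = (Q(w) Q(v) - B(w,v)^2) / Q(v)^(3/2) with
   Q, B the quadratic and bilinear forms of G, which is nonnegative by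
   Cauchy-Schwarz and positive unless w = c v.  In that case
   grad N_G(v) . w = c N_G(v), so the second summand is c^2 F(v)^2 > 0. *)

From HB Require Import structures.
From mathcomp Require Import all_boot all_order all_algebra.
From mathcomp Require Import all_classical all_reals all_analysis.
From mathcomp Require Import ring measurable_realfun.
Import Order.TTheory GRing.Theory Num.Theory.
Import numFieldNormedType.Exports.
Local Open Scope classical_set_scope.
Local Open Scope ring_scope.

Set Implicit Arguments.
Unset Strict Implicit.
Unset Printing Implicit Defensive.

Section ae_Rintegral.
Context d (T : measurableType d) (R : realType) (mu : {measure set T -> \bar R}).
Implicit Types f g : T -> R.

Lemma Rintegral_ae_eq f g :
  mu.-integrable setT (EFin \o f) -> mu.-integrable setT (EFin \o g) ->
  {ae mu, forall x, f x = g x} -> Rintegral mu setT f = Rintegral mu setT g.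
Proof.
move=> fi gi fg; congr fine; apply: ae_eq_integral => //.
- exact: measurable_int fi.
- exact: measurable_int gi.
- by apply: filterS fg => x /= ->.
Qed.

Lemma Rintegral_ae_ge0 f : mu.-integrable setT (EFin \o f) ->
  {ae mu, forall x, 0 <= f x} -> 0 <= Rintegral mu setT f.
Proof.
move=> fi f0; rewrite (@Rintegral_ae_eq _ (fun x => `|f x|)) //; last first.
  by apply: filterS f0 => x /ger0_norm.
- exact: integrable_norm.
- by apply: Rintegral_ge0 => x _.
Qed.

Lemma Rintegral_ae_gt0 f : (0 < mu setT)%E -> mu.-integrable setT (EFin \o f) ->
  {ae mu, forall x, 0 < f x} -> 0 < Rintegral mu setT f.
Proof.
move=> mu_gt0 fi f_gt0.
have f_ge0 : {ae mu, forall x, 0 <= f x} by apply: filterS f_gt0 => x /ltW.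
(* A null integral of |f| forces f = 0 a.e., which is impossible on a
   non-null space where f > 0 a.e. *)
rewrite lt_def Rintegral_ae_ge0 // andbT; apply/eqP => f0.
have mf := measurable_int _ fi.
have : (\int[mu]_x `|(f x)%:E| = 0)%E.
  rewrite -[0%E]/((0:R)%:E) -f0 fineK; last exact: integrable_fin_num.
  apply: ae_eq_integral => //; first exact: measurableT_comp.
  by apply: filterS f_gt0 => x fx_gt0 _ /=; rewrite gtr0_norm.
move=> /(ae_eq_integral_abs mu measurableT mf) f_eq0.
have : {ae mu, forall x, False}.
  by apply: filterS2 f_gt0 f_eq0 => x /gt_eqF + /(_ I) [] /eqP; rewrite /= => ->.
have aeP : ProperFilter (almost_everywhere mu).
  exact: ae_properfilter_algebraOfSetsType mu_gt0.
by move=> /filter_ex [].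
Qed.

Lemma integrableZl_EFin (k : R) f : mu.-integrable setT (EFin \o f) ->
  mu.-integrable setT (fun x => (k * f x)%:E).
Proof.
by move=> fi; under eq_fun do rewrite EFinM; exact: integrableZl.
Qed.

Lemma integrable_lincomb (I : finType) (c : I -> R) (N : I -> T -> R) :
  (forall i, mu.-integrable setT (EFin \o N i)) ->
  mu.-integrable setT (fun x => (\sum_i c i * N i x)%:E).
Proof.
move=> Ni; under eq_fun do rewrite -sumEFin.
by apply: integrable_sum => // i _; exact: integrableZl_EFin.
Qed.

Lemma Rintegral_lincomb (I : finType) (c : I -> R) (N : I -> T -> R) :
  (forall i, mu.-integrable setT (EFin \o N i)) ->
  Rintegral mu setT (fun x => \sum_i c i * N i x) =
  \sum_i c i * Rintegral mu setT (N i).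
Proof.
move=> Ni; under [RHS]eq_bigr do rewrite -RintegralZl //.
apply: EFin_inj; rewrite /Rintegral EFin_sum_fine => [|i _]; last first.
  exact/integrable_fin_num/integrableZl_EFin.
rewrite fineK; last exact/integrable_fin_num/integrable_lincomb.
under eq_integral do rewrite -sumEFin.
by rewrite integral_sum // => i; exact: integrableZl_EFin.
Qed.

End ae_Rintegral.

Definition bform (R : realType) (q : nat) (A : 'M[R]_q) (u w : 'rV[R]_q) : R :=
  (u *m A *m w^T) 0 0.

Section bform.
Context (R : realType) (q : nat).
Implicit Types (A : 'M[R]_q) (u w x : 'rV[R]_q).

Lemma qformE A x : qform A x = bform A x x. Proof. by []. Qed.

Lemma bform_trmx A u w : bform A^T w u = bform A u w.
Proof.
rewrite /bform; have -> : (u *m A *m w^T) 0 0 = (u *m A *m w^T)^T 0 0.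
  by rewrite [RHS]mxE.
by rewrite !trmx_mul trmxK mulmxA.
Qed.

Lemma bformC A u w : symmx A -> bform A u w = bform A w u.
Proof. by move=> sA; rewrite -bform_trmx sA. Qed.

Lemma bformDl A u1 u2 w : bform A (u1 + u2) w = bform A u1 w + bform A u2 w.
Proof. by rewrite /bform !mulmxDl mxE. Qed.

Lemma bformZl A k u w : bform A (k *: u) w = k * bform A u w.
Proof. by rewrite /bform -!scalemxAl mxE. Qed.

Lemma bformDr A u w1 w2 : bform A u (w1 + w2) = bform A u w1 + bform A u w2.
Proof. by rewrite -!(bform_trmx A) bformDl. Qed.

Lemma bformZr A k u w : bform A u (k *: w) = k * bform A u w.
Proof. by rewrite -!(bform_trmx A) bformZl. Qed.

Lemma bform_coordl A w x :
  \sum_(i < q) w 0 i * bform A (ebasis R i) x = bform A w x.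
Proof.
rewrite [in RHS](row_sum_delta w) /bform !mulmx_suml summxE.
by apply: eq_bigr => i _; rewrite -!scalemxAl [RHS]mxE.
Qed.

Lemma bform_coordr A w x :
  \sum_(i < q) w 0 i * bform A x (ebasis R i) = bform A x w.
Proof. by under eq_bigr do rewrite -bform_trmx; rewrite bform_coordl bform_trmx. Qed.

Lemma qform_line A e x (h : R) : symmx A ->
  qform A (h *: e + x) = qform A x + h * (2 * bform A e x) + h ^+ 2 * qform A e.
Proof.
move=> sA; rewrite !qformE !bformDl !bformDr !bformZl !bformZr (bformC x e sA).
by ring.
Qed.

(* The defect in Cauchy-Schwarz is Q(v) times Q of the component of w
   orthogonal to v. *)
Lemma qform_Cauchy_Schwarz_defect A v w : symmx A -> 0 < qform A v ->
  qform A w * qform A v - bform A w v ^+ 2 =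
  qform A v * qform A (w - (bform A w v / qform A v) *: v).
Proof.
move=> sA Qv_gt0; have Qv_neq0 : bform A v v != 0 by rewrite -qformE gt_eqF.
rewrite -[- (_ *: v)]scaleNr !qformE !bformDl !bformDr !bformZl !bformZr.
rewrite (bformC v w sA).
by field.
Qed.

Lemma bform_ebasis A i j : bform A (ebasis R i) (ebasis R j) = A i j.
Proof. by rewrite /bform /ebasis -rowE trmx_delta -colE !mxE. Qed.

Lemma qform_pair_sum (M : 'M[R]_q) w :
  qform M w = \sum_(p : 'I_q * 'I_q) w 0 p.1 * w 0 p.2 * M p.1 p.2.
Proof.
rewrite /qform mxE -(pair_bigA _ (fun i j => w 0 i * w 0 j * M i j)) /=.
rewrite exchange_big /=; apply: eq_bigr => j _.
rewrite !mxE big_distrl /=; apply: eq_bigr => i _.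
by ring.
Qed.

End bform.

Lemma sqr_sum_pair (R : comPzRingType) (n : nat) (a : 'I_n -> R) :
  (\sum_i a i) ^+ 2 = \sum_(p : 'I_n * 'I_n) a p.1 * a p.2.
Proof.
rewrite expr2 big_distrl -(pair_bigA _ (fun i j => a i * a j)) /=.
by apply: eq_bigr => i _; rewrite big_distrr.
Qed.

Lemma derive_along_line (R : numFieldType) (V W : normedModType R) (f : V -> W) x e :
  'D_e f x = 'D_1 (fun h : R => f (h *: e + x)) 0.
Proof.
rewrite /derive; set g1 := fun h => h^-1 *: _; set g2 := fun h => h^-1 *: _.
suff -> : g1 = g2 by [].
by apply/funext => h; rewrite /g1 /g2 /= addr0 scale0r add0r [_%:A]mulr1.
Qed.

Lemma near_neq0 (R : numFieldType) (V : normedModType R) (v : V) :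
  v != 0 -> \forall y \near v, y != 0.
Proof. exact: (@cvgr_neq0 _ _ _ (nbhs v) _ id v (@cvg_id _ _)). Qed.

Lemma is_derive_affine (R : numFieldType) (x a b : R) :
  is_derive x 1 (fun h : R => a + h * b) b.
Proof.
have -> : (fun h : R => a + h * b) = cst a + ( *%R ^~ b) by [].
by apply: is_derive_eq; rewrite !(scale0r, scaler0, add0r, addr0) [b%:A]mulr1.
Qed.

Lemma is_derive_quadratic (R : numFieldType) (a b c : R) :
  is_derive (0 : R) 1 (fun h : R => a + h * b + h ^+ 2 * c) b.
Proof.
have -> : (fun h : R => a + h * b + h ^+ 2 * c) =
  cst a + ( *%R ^~ b) + (fun h => h ^+ 2 * c) by [].
by apply: is_derive_eq; rewrite !(scale0r, scaler0, add0r, addr0) [b%:A]mulr1.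
Qed.

Lemma is_derive_sqrt_quadratic (R : realType) (a b c : R) : 0 < a ->
  is_derive (0 : R) 1 (fun h : R => Num.sqrt (a + h * b + h ^+ 2 * c))
    (b / (2 * Num.sqrt a)).
Proof.
move=> a_gt0; pose p := fun h : R => a + h * b + h ^+ 2 * c.
have p0 : p 0 = a by rewrite /p mul0r expr0n /= mul0r !addr0.
have dp := is_derive_quadratic a b c.
have dsqrt : is_derive (p 0) 1 Num.sqrt (2 * Num.sqrt a)^-1.
  by rewrite p0; exact: is_derive1_sqrt.
change (is_derive (0 : R) 1 (Num.sqrt \o p) (b / (2 * Num.sqrt a))).
split.
  by apply/derivable1_diffP/differentiable_comp; apply/derivable1_diffP; case: dp.
rewrite -derive1E derive1_comp // !derive1E.
by rewrite (@derive_val _ _ _ _ _ _ _ dsqrt) (@derive_val _ _ _ _ _ _ _ dp) mulrC.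
Qed.

Lemma derive_affine_div_sqrt_quadratic (R : realType) (a b c k g : R) : 0 < a ->
  'D_1 (fun h : R => (k + h * g) / Num.sqrt (a + h * b + h ^+ 2 * c)) 0
  = g / Num.sqrt a - k * b / (2 * a * Num.sqrt a).
Proof.
move=> a_gt0; pose S := fun h : R => Num.sqrt (a + h * b + h ^+ 2 * c).
have dS : is_derive (0 : R) 1 S (b / (2 * Num.sqrt a)).
  exact: is_derive_sqrt_quadratic.
have S0 : S 0 = Num.sqrt a by rewrite /S mul0r expr0n /= mul0r !addr0.
have S0_neq0 : S 0 != 0 by rewrite S0 gt_eqF ?sqrtr_gt0.
have dl := is_derive_affine 0 k g.
(* [deriveV] only recognizes an inverse of the form [fun y => (f y)^-1]. *)
have -> : (fun h : R => (k + h * g) / Num.sqrt (a + h * b + h ^+ 2 * c))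
  = (fun h : R => k + h * g) * (fun h => (S h)^-1) by [].
rewrite deriveM // deriveV //.
rewrite (@derive_val _ _ _ _ _ _ _ dS) (@derive_val _ _ _ _ _ _ _ dl).
rewrite /= mul0r addr0 -[X in _ = _ - _ / (2 * X * _)](sqr_sqrtr (ltW a_gt0)).
by rewrite /GRing.scale /= S0; field; rewrite -S0.
Qed.

Section sqrtqf_derivatives.
Context (R : realType) (q : nat) (A : 'M[R]_q).
Hypothesis symA : symmx A.

Lemma is_derive_sqrtqf x e : 0 < qform A x ->
  is_derive x e (sqrtqf A) (bform A e x / sqrtqf A x).
Proof.
move=> Qx_gt0.
have line : (fun h : R => sqrtqf A (h *: e + x)) =
    (fun h => Num.sqrt (qform A x + h * (2 * bform A e x) + h ^+ 2 * qform A e)).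
  by apply/funext => h; rewrite /sqrtqf qform_line.
have dline := is_derive_sqrt_quadratic (2 * bform A e x) (qform A e) Qx_gt0.
split; first by apply/derivable1P; rewrite line; case: dline.
rewrite derive_along_line line (@derive_val _ _ _ _ _ _ _ dline) /sqrtqf.
have : Num.sqrt (qform A x) != 0 by rewrite gt_eqF ?sqrtr_gt0.
by move=> ?; field.
Qed.

Lemma derive_bform_div_sqrtqf v e1 e2 : 0 < qform A v ->
  'D_e1 (fun y => bform A e2 y / sqrtqf A y) v =
  (bform A e2 e1 * qform A v - bform A e2 v * bform A e1 v) /
  (qform A v * sqrtqf A v).
Proof.
move=> Qv_gt0; rewrite derive_along_line.
have -> : (fun h : R => bform A e2 (h *: e1 + v) / sqrtqf A (h *: e1 + v)) =
    (fun h => (bform A e2 v + h * bform A e2 e1) /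
      Num.sqrt (qform A v + h * (2 * bform A e1 v) + h ^+ 2 * qform A e1)).
  by apply/funext => h; rewrite /sqrtqf qform_line // bformDr bformZr addrC.
rewrite derive_affine_div_sqrt_quadratic // /sqrtqf.
have sQv_neq0 : Num.sqrt (qform A v) != 0 by rewrite gt_eqF ?sqrtr_gt0.
have Qv_neq0 : qform A v != 0 by rewrite gt_eqF.
by field; rewrite sQv_neq0 Qv_neq0.
Qed.

Lemma derive2_sqrtqf v e1 e2 : posdefmx_q A -> v != 0 ->
  'D_e1 ('D_e2 (sqrtqf A)) v =
  (bform A e2 e1 * qform A v - bform A e2 v * bform A e1 v) /
  (qform A v * sqrtqf A v).
Proof.
move=> posA v_neq0; rewrite -derive_bform_div_sqrtqf ?posA //.
apply: near_eq_derive; near=> y.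
have y_neq0 : y != 0 by near: y; exact: (near_neq0 v_neq0).
by rewrite (@derive_val _ _ _ _ _ _ _ (is_derive_sqrtqf e2 (posA y y_neq0))).
Unshelve. all: by end_near.
Qed.

End sqrtqf_derivatives.

Definition grad_dot (R : realType) (q : nat) (f : 'rV[R]_q -> R) (v w : 'rV[R]_q) : R :=
  \sum_(i < q) w 0 i * 'D_(ebasis R i) f v.

Section sqrtqf_forms.
Context (R : realType) (q : nat) (A : 'M[R]_q).
Hypothesis symA : symmx A.
Implicit Types v w : 'rV[R]_q.

Lemma grad_dot_sqrtqf v w : 0 < qform A v ->
  grad_dot (sqrtqf A) v w = bform A w v / sqrtqf A v.
Proof.
move=> Qv_gt0; rewrite /grad_dot -bform_coordl big_distrl /=.
apply: eq_bigr => i _.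
have := is_derive_sqrtqf symA (ebasis R i) Qv_gt0.
by move=> /(@derive_val _ _ _ _ _ _ _) ->; rewrite mulrA.
Qed.

Lemma grad_dot_sqrtqf_parallel v c : 0 < qform A v ->
  grad_dot (sqrtqf A) v (c *: v) = c * sqrtqf A v.
Proof.
move=> Qv_gt0; rewrite grad_dot_sqrtqf // bformZl -qformE /sqrtqf.
by rewrite -{1}(sqr_sqrtr (ltW Qv_gt0)) -mulrA mulfK // gt_eqF // sqrtr_gt0.
Qed.

Lemma qform_hessian_sqrtqf v w : posdefmx_q A -> v != 0 ->
  qform (hessian (sqrtqf A) v) w =
  (qform A w * qform A v - bform A w v ^+ 2) / (qform A v * sqrtqf A v).
Proof.
move=> posA v_neq0; have Qv_gt0 := posA v v_neq0.
have Qv_neq0 : qform A v != 0 by rewrite gt_eqF.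
have sQv_neq0 : sqrtqf A v != 0 by rewrite gt_eqF ?sqrtr_gt0.
rewrite [qform (hessian _ _) w]qform_pair_sum [qform A w]qform_pair_sum.
rewrite -bform_coordl sqr_sum_pair !mulr_suml -sumrB mulr_suml.
apply: eq_bigr => -[i j] _ /=; rewrite mxE derive2_sqrtqf // !bform_ebasis.
have -> : A j i = A i j by rewrite -[in RHS]symA mxE.
by field; rewrite Qv_neq0 sQv_neq0.
Qed.

Lemma qform_hessian_sqrtqf_ge0 v w : posdefmx_q A -> v != 0 ->
  0 <= qform (hessian (sqrtqf A) v) w.
Proof.
move=> posA v_neq0; have Qv_gt0 := posA v v_neq0.
rewrite qform_hessian_sqrtqf // qform_Cauchy_Schwarz_defect //.
apply: divr_ge0; last by rewrite mulr_ge0 ?sqrtr_ge0 // ltW.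
apply: mulr_ge0; first exact: ltW.
set u := w - _ *: v; have [->|u_neq0] := eqVneq u 0.
  by rewrite qformE /bform !mul0mx mxE.
exact/ltW/posA.
Qed.

Lemma qform_hessian_sqrtqf_gt0 v w : posdefmx_q A -> v != 0 ->
  ~ (exists c, w = c *: v) -> 0 < qform (hessian (sqrtqf A) v) w.
Proof.
move=> posA v_neq0 w_nparallel; have Qv_gt0 := posA v v_neq0.
rewrite qform_hessian_sqrtqf // qform_Cauchy_Schwarz_defect //.
apply: divr_gt0; last by rewrite mulr_gt0 ?sqrtr_gt0.
rewrite mulr_gt0 // posA //; apply/eqP => /eqP; rewrite subr_eq0 => /eqP wE.
exact: w_nparallel (ex_intro _ _ wE).
Qed.

End sqrtqf_forms.

Lemma qform_half_hessian_sqr (R : realType) (q : nat) (f : 'rV[R]_q -> R) v w :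
  (forall j, \forall y \near v, derivable f y (ebasis R j)) ->
  (forall i j, derivable ('D_(ebasis R j) f) v (ebasis R i)) ->
  qform (2^-1 *: hessian (fun x => f x ^+ 2) v) w =
  f v * qform (hessian f v) w + grad_dot f v w ^+ 2.
Proof.
move=> df ddf; have dfv j := nbhs_singleton (df j).
have hessian_sqr i j : hessian (fun x => f x ^+ 2) v i j =
    2 * (f v * hessian f v i j + 'D_(ebasis R j) f v * 'D_(ebasis R i) f v).
  rewrite !mxE (@near_eq_derive _ _ _ _ (2 \*o (f * 'D_(ebasis R j) f))); last first.
    near=> y; have -> : (fun x => f x ^+ 2) = f * f by apply/funext => x; rewrite expr2.
    by rewrite deriveM /= 1?mulr_natl 1?mulr2n //; near: y; exact: df.
  rewrite deriveMl; last exact: derivableM.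
  by rewrite deriveM // mulrC [_ * 'D_ _ f v]mulrC.
rewrite !qform_pair_sum /grad_dot sqr_sum_pair big_distrr -big_split /=.
apply: eq_bigr => -[i j] _ /=.
(* The entries of [hessian] live in a different but convertible carrier, which
   defeats rewriting with [hessian_sqr]. *)
rewrite mxE; transitivity (w 0 i * w 0 j * (2^-1 * (2 * (f v * hessian f v i j +
    'D_(ebasis R j) f v * 'D_(ebasis R i) f v)))); last by field.
by congr (_ * (_ * _)); exact: hessian_sqr.
Unshelve. all: by end_near.
Qed.

Section expectation_of_derivatives.
Context d (T : measurableType d) (R : realType) (mu : {measure set T -> \bar R}).
Context (q : nat) (f : 'rV[R]_q -> R) (g : T -> 'rV[R]_q -> R) (v : 'rV[R]_q).

Lemma integrable_grad_dot w :
  (forall i, mu.-integrable setT (fun x => ('D_(ebasis R i) (g x) v)%:E)) ->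
  mu.-integrable setT (fun x => (grad_dot (g x) v w)%:E).
Proof. by move=> D1_int; exact: integrable_lincomb. Qed.

Lemma grad_dot_Rintegral w :
  (forall i, mu.-integrable setT (fun x => ('D_(ebasis R i) (g x) v)%:E)) ->
  (forall i, 'D_(ebasis R i) f v =
     Rintegral mu setT (fun x => 'D_(ebasis R i) (g x) v)) ->
  grad_dot f v w = Rintegral mu setT (fun x => grad_dot (g x) v w).
Proof.
move=> D1_int D1_comm; rewrite Rintegral_lincomb //.
by apply: eq_bigr => i _; rewrite D1_comm.
Qed.

Lemma integrable_qform_hessian w :
  (forall i j, mu.-integrable setT
     (fun x => ('D_(ebasis R i) ('D_(ebasis R j) (g x)) v)%:E)) ->
  mu.-integrable setT (fun x => (qform (hessian (g x) v) w)%:E).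
Proof.
move=> D2_int; under eq_fun do rewrite qform_pair_sum.
by apply: integrable_lincomb => -[i j]; under eq_fun do rewrite mxE; exact: D2_int.
Qed.

Lemma qform_hessian_Rintegral w :
  (forall i j, mu.-integrable setT
     (fun x => ('D_(ebasis R i) ('D_(ebasis R j) (g x)) v)%:E)) ->
  (forall i j, 'D_(ebasis R i) ('D_(ebasis R j) f) v =
     Rintegral mu setT (fun x => 'D_(ebasis R i) ('D_(ebasis R j) (g x)) v)) ->
  qform (hessian f v) w = Rintegral mu setT (fun x => qform (hessian (g x) v) w).
Proof.
move=> D2_int D2_comm; under eq_Rintegral do rewrite qform_pair_sum.
rewrite qform_pair_sum Rintegral_lincomb => [|[i j]]; last first.
  by under eq_fun do rewrite mxE; exact: D2_int.
apply: eq_bigr => -[i j] _; rewrite mxE D2_comm; congr (_ * _).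
by apply: eq_Rintegral => x _; rewrite mxE.
Qed.

End expectation_of_derivatives.

Section expF_sqrtqf.
Context d (T : measurableType d) (R : realType) (P : probability T R).
Context (q : nat) (G : T -> 'M[R]_q) (v : 'rV[R]_q).
Hypothesis G_sym : forall om, symmx (G om).
Hypothesis G_pd : {ae P, forall om, posdefmx_q (G om)}.
Hypothesis v_neq0 : v != 0.

Let P_gt0 : (0 < P setT)%E. Proof. by rewrite probability_setT. Qed.

Lemma expF_gt0 : P.-integrable setT (fun om => (sqrtqf (G om) v)%:E) ->
  0 < expF P G v.
Proof.
move=> F_int; apply: Rintegral_ae_gt0 P_gt0 F_int _.
by apply: filterS G_pd => om posG; rewrite sqrtr_gt0 posG.
Qed.

Lemma Rintegral_grad_dot_sqrtqf_parallel c :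
  P.-integrable setT (fun om => (sqrtqf (G om) v)%:E) ->
  (forall i, P.-integrable setT
     (fun om => ('D_(ebasis R i) (sqrtqf (G om)) v)%:E)) ->
  Rintegral P setT (fun om => grad_dot (sqrtqf (G om)) v (c *: v)) =
  c * expF P G v.
Proof.
move=> F_int D1_int; rewrite /expF -RintegralZl //.
apply: (@Rintegral_ae_eq _ _ _ P (fun om => grad_dot (sqrtqf (G om)) v (c *: v))
  (fun om => c * sqrtqf (G om) v)).
- exact: integrable_grad_dot.
- exact: integrableZl_EFin.
- apply: filterS G_pd => om posG.
  exact (grad_dot_sqrtqf_parallel (G_sym om) c (posG v v_neq0)).
Qed.

Section hessian.
Variable w : 'rV[R]_q.
Hypothesis D2_int : forall i j, P.-integrable setT
  (fun om => ('D_(ebasis R i) ('D_(ebasis R j) (sqrtqf (G om))) v)%:E).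

Lemma Rintegral_qform_hessian_sqrtqf_ge0 :
  0 <= Rintegral P setT (fun om => qform (hessian (sqrtqf (G om)) v) w).
Proof.
apply: Rintegral_ae_ge0; first exact: integrable_qform_hessian.
apply: filterS G_pd => om posG.
exact (qform_hessian_sqrtqf_ge0 (G_sym om) w posG v_neq0).
Qed.

Lemma Rintegral_qform_hessian_sqrtqf_gt0 : ~ (exists c, w = c *: v) ->
  0 < Rintegral P setT (fun om => qform (hessian (sqrtqf (G om)) v) w).
Proof.
move=> w_nparallel; apply: Rintegral_ae_gt0 P_gt0 _ _.
  exact: integrable_qform_hessian.
apply: filterS G_pd => om posG.
exact (qform_hessian_sqrtqf_gt0 (G_sym om) posG v_neq0 w_nparallel).
Qed.

End hessian.
End expF_sqrtqf.

Unset Implicit Arguments.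

Theorem mainTheorem3 (d : measure_display) (T : measurableType d) (R : realType)
  (P : probability T R) (q : nat) (G : T -> 'M[R]_q)
  (G_meas : forall i j, measurable_fun setT (fun om => G om i j))
  (G_sym : forall om, symmx (G om))
  (G_pd : {ae P, forall om, posdefmx_q (G om)})
  (F_int : forall v : 'rV[R]_q,
     P.-integrable setT (fun om => (sqrtqf (G om) v)%:E))
  (D1_int : forall v : 'rV[R]_q, v != 0 -> forall i : 'I_q,
     P.-integrable setT (fun om => ('D_(ebasis R i) (sqrtqf (G om)) v)%:E))
  (D2_int : forall v : 'rV[R]_q, v != 0 -> forall i j : 'I_q,
     P.-integrable setT
       (fun om => ('D_(ebasis R i) ('D_(ebasis R j) (sqrtqf (G om))) v)%:E))
  (D1_der : forall v : 'rV[R]_q, v != 0 -> forall i : 'I_q,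
     derivable (expF P G) v (ebasis R i))
  (D1_comm : forall v : 'rV[R]_q, v != 0 -> forall i : 'I_q,
     'D_(ebasis R i) (expF P G) v
       = Rintegral P setT (fun om => 'D_(ebasis R i) (sqrtqf (G om)) v))
  (D2_der : forall v : 'rV[R]_q, v != 0 -> forall i j : 'I_q,
     derivable ('D_(ebasis R j) (expF P G)) v (ebasis R i))
  (D2_comm : forall v : 'rV[R]_q, v != 0 -> forall i j : 'I_q,
     'D_(ebasis R i) ('D_(ebasis R j) (expF P G)) v
       = Rintegral P setT
           (fun om => 'D_(ebasis R i) ('D_(ebasis R j) (sqrtqf (G om))) v)) :
  forall v : 'rV[R]_q, v != 0 ->
  forall w : 'rV[R]_q, w != 0 ->
    0 < qform (2^-1 *: hessian (fun x => expF P G x ^+ 2) v) w.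
Proof.
move=> v v_neq0 w w_neq0.
have F_gt0 := expF_gt0 G_pd v_neq0 (F_int v).
rewrite qform_half_hessian_sqr; last 2 first.
- by move=> j; near=> y; apply: D1_der; near: y; exact: (near_neq0 v_neq0).
- by move=> i j; exact: D2_der.
rewrite (qform_hessian_Rintegral _ (D2_int v v_neq0) (D2_comm v v_neq0)).
rewrite (grad_dot_Rintegral _ (D1_int v v_neq0) (D1_comm v v_neq0)).
have [[c wE]|w_nparallel] := pselect (exists c : R, w = c *: v).
- have c_neq0 : c != 0 by apply: contraNneq w_neq0 => c0; rewrite wE c0 scale0r.
  rewrite wE Rintegral_grad_dot_sqrtqf_parallel //; last exact: D1_int.
  apply: ltr_wpDl; last by rewrite exprn_even_gt0 // mulf_neq0 // gt_eqF.
  apply: mulr_ge0; first exact: ltW.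
  exact: Rintegral_qform_hessian_sqrtqf_ge0 G_sym G_pd v_neq0 _ (D2_int v v_neq0).
- apply: ltr_pwDl; last exact: sqr_ge0.
  apply: mulr_gt0 F_gt0 _.
  exact: Rintegral_qform_hessian_sqrtqf_gt0 G_sym G_pd v_neq0 _
    (D2_int v v_neq0) w_nparallel.
Unshelve. all: by end_near.
Qed.
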